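(* For every integer $d \geq 2$ and all integers $s_1, \ldots, s_k \geq 1$, $$\frac{s_1}{s_1+\ldots+s_k}\mathsf {Brac}_{d,s_1}+\ldots+\frac{s_k}{s_1+\ldots+s_k}\mathsf {Brac}_{d,s_k}\subseteq \mathsf {Brac}_{d,s_1+\ldots+s_k}.$$ In particular, for all $s \geq 1$, $\mathsf {Brac}_{d,1} =\mathsf {Brac}_{d} \subseteq \mathsf {Brac}_{d,s}$.
   Context: $\Delta_d=\{\alpha\in\mathbb R^d:\alpha_i\ge0,\ \sum_i\alpha_i=1\}$; pairs $(\alpha,\beta)\in\Delta_d^2$ are added and scaled componentwise. $\mathsf{Brac}_d=\{(\alpha,\beta)\in\Delta_d^2:\ \forall i,\ \sqrt{\alpha_i\beta_i}\le\sum_{j\ne i}\sqrt{\alpha_j\beta_j}\}$. For $s\ge1$, $\mathsf{Brac}_{d,s}$ is the set of $(\alpha,\beta)\in\Delta_d^2$ for which there exist $A_1,\dots,A_d,B_1,\dots,B_d\in M_s(\mathbb C)$ with $\sum_i A_iA_i^*=\sum_iB_iB_i^*=I_s$, $\sum_iA_iB_i^*=0$, and $\tfrac1s\|A_i\|_F^2=\alpha_i$, $\tfrac1s\|B_i\|_F^2=\beta_i$ for all $i$, where $\|X\|_F=\operatorname{Tr}(XX^* )^{1/2}$. *)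

From HB Require Import structures.
From mathcomp Require Import all_boot all_order all_algebra.
From mathcomp Require Import reals.
From mathcomp Require Import complex.
Set Implicit Arguments. Unset Strict Implicit. Unset Printing Implicit Defensive.
Import Order.TTheory GRing.Theory Num.Theory.
Local Open Scope ring_scope.
Local Open Scope complex_scope.

Definition ctr (R : realType) (m n : nat) (X : 'M[R[i]]_(m, n)) : 'M[R[i]]_(n, m) :=
  (map_mx conjc X)^T.

Definition simplex (R : realType) (d : nat) (a : 'I_d -> R) : Prop :=
  (forall i, 0 <= a i) /\ \sum_(i < d) a i = 1.

Definition Brac (R : realType) (d : nat) (a b : 'I_d -> R) : Prop :=
  simplex a /\ simplex b /\
  forall i : 'I_d,
    Num.sqrt (a i * b i) <= \sum_(j < d | j != i) Num.sqrt (a j * b j).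

(* Brac_{d,s} ; the squared Frobenius norm ||X||_F^2 = Tr(X X^* ) *)
Definition Brac_s (R : realType) (d s : nat) (a b : 'I_d -> R) : Prop :=
  simplex a /\ simplex b /\
  exists A B : 'I_d -> 'M[R[i]]_s,
    \sum_(i < d) A i *m ctr (A i) = 1%:M /\
    \sum_(i < d) B i *m ctr (B i) = 1%:M /\
    \sum_(i < d) A i *m ctr (B i) = 0 /\
    (forall i, (s%:R)^-1 * \tr (A i *m ctr (A i)) = (a i)%:C) /\
    (forall i, (s%:R)^-1 * \tr (B i *m ctr (B i)) = (b i)%:C).

(* If (A_i, B_i) and (A'_i, B'_i) are witnesses for Brac_{d,s} and Brac_{d,s'}, then the
   block-diagonal matrices (diag(A_i, A'_i), diag(B_i, B'_i)) are a witness for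
   Brac_{d,s+s'}; since traces add, they realise the (s, s')-weighted average of the two
   pairs. Induction on k gives the general convex combination, and k copies of one pair
   give Brac_{d,s} ⊆ Brac_{d,ks}.
   For s = 1 the A_i, B_i are complex numbers with |A_i|^2 = α_i, |B_i|^2 = β_i, so the
   condition Σ A_i conj(B_i) = 0 says that segments of lengths √(α_i β_i) form a closed
   polygon in the plane. Such a polygon exists iff no side exceeds the sum of the others:
   cut the sides into the blocks before, at and after the index where the partial sums pass
   half the perimeter, and close the triangle with these three side lengths using the law
   of cosines. *)
From HB Require Import structures.
From mathcomp Require Import all_boot all_order all_algebra.
From mathcomp Require Import reals complex.
From mathcomp Require Import ring lra zify.
Import Order.TTheory GRing.Theory Num.Theory.
Set Implicit Arguments. Unset Strict Implicit. Unset Printing Implicit Defensive.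
Local Open Scope ring_scope.

Lemma big_ord_split3 (V : nmodType) n (j : 'I_n) (F : 'I_n -> V) :
  \sum_(i < n) F i =
  \sum_(i < n | (i < j)%N) F i + F j + \sum_(i < n | (j < i)%N) F i.
Proof.
rewrite (bigD1 j) //= (bigID (fun i : 'I_n => (i < j)%N)) /= addrA [F j + _]addrC.
congr (_ + _ + _); apply: eq_bigl => i; rewrite -val_eqE /=; apply/idP/idP; lia.
Qed.

Lemma mulmx_block_diag (K : pzRingType) m n (X X' : 'M[K]_m) (Y Y' : 'M[K]_n) :
  block_mx X 0 0 Y *m block_mx X' 0 0 Y' = block_mx (X *m X') 0 0 (Y *m Y').
Proof. by rewrite mulmx_block !mulmx0 !mul0mx !addr0 !add0r. Qed.

Lemma sum_block_diag (V : nmodType) (I : Type) (r : seq I) (P : pred I) m n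
    (F : I -> 'M[V]_m) (G : I -> 'M[V]_n) :
  \sum_(i <- r | P i) block_mx (F i) 0 0 (G i) =
  block_mx (\sum_(i <- r | P i) F i) 0 0 (\sum_(i <- r | P i) G i).
Proof.
elim/big_rec3: _ => [|i x y z _ ->]; first by rewrite block_mx0.
by rewrite add_block_mx !addr0.
Qed.

Lemma half_sum_index (F : realDomainType) n (r : 'I_n.+1 -> F) :
  (forall i, 0 <= r i) ->
  exists j : 'I_n.+1,
    2 * \sum_(i < n.+1 | (i < j)%N) r i <= \sum_(i < n.+1) r i /\
    \sum_(i < n.+1) r i <= 2 * (\sum_(i < n.+1 | (i < j)%N) r i + r j).
Proof.
move=> r_ge0; set S := \sum_(i < n.+1) r i.
pose P m := \sum_(i < n.+1 | (i < m)%N) r i.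
have PS : P n.+1 = S by apply: eq_bigl => i; rewrite ltn_ord.
have Sn : S <= 2 * P n.+1 by rewrite PS ler_peMl ?ler1n ?sumr_ge0.
have [j Sj j_min] := ex_minnP (ex_intro (fun m => S <= 2 * P m.+1) n Sn).
have j_lt : (j < n.+1)%N by rewrite ltnS; exact: j_min.
exists (Ordinal j_lt); split; rewrite -/(P j).
  case: (posnP j) => [->|j_gt0]; first by rewrite /P big_pred0 ?mulr0 ?sumr_ge0.
  rewrite leNgt; apply/negP => /ltW.
  by rewrite -(prednK j_gt0) => /j_min; rewrite leqNgt ltn_predL j_gt0.
suff <- : P j.+1 = P j + r (Ordinal j_lt) by [].
rewrite /P (bigD1 (Ordinal j_lt)) //= addrC; congr (_ + _).
by apply: eq_bigl => i; rewrite -val_eqE /=; apply/idP/idP; lia.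
Qed.

Lemma cosine_law_solution (F : realFieldType) (L r T : F) :
  0 <= L -> 0 <= T -> r <= L + T -> L <= r + T -> T <= L + r ->
  exists x, x ^+ 2 <= 1 /\ 2 * L * T * x = r ^+ 2 - L ^+ 2 - T ^+ 2.
Proof.
move=> L_ge0 T_ge0 rLT LrT TLr.
have [LT0|LT_neq0] := eqVneq (L * T) 0.
  exists 1; split; first by rewrite expr1n.
  have /orP[/eqP L0|/eqP T0] : (L == 0) || (T == 0) by rewrite -mulf_eq0 LT0.
    have -> : r = T by apply/le_anti/andP; split; lra.
    by rewrite L0; ring.
  have -> : r = L by apply/le_anti/andP; split; lra.
  by rewrite T0; ring.
have LT_gt0 : 0 < 2 * L * T by rewrite -mulrA mulr_gt0 // lt_def LT_neq0 mulr_ge0.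
exists ((r ^+ 2 - L ^+ 2 - T ^+ 2) / (2 * L * T)); split; last first.
  by rewrite mulrC divfK ?gt_eqF.
rewrite expr_div_n ler_pdivrMr ?exprn_gt0 // mul1r.
(* Heron: (2LT)^2 - (r^2 - L^2 - T^2)^2 = (L+T-r)(L+T+r)(r-L+T)(r+L-T). *)
have : 0 <= (L + T - r) * (L + T + r) * ((r - L + T) * (r + L - T)).
  by rewrite !mulr_ge0 //; lra.
nra.
Qed.

Section PlanarPolygons.
Variable R : rcfType.
Local Open Scope complex_scope.

Lemma exists_unit_normD (L r T : R) :
  0 <= L -> 0 <= T -> r <= L + T -> L <= r + T -> T <= L + r ->
  exists v : R[i], `|v| = 1 /\ `|L%:C + T%:C * v| = r%:C.
Proof.
move=> L_ge0 T_ge0 rLT LrT TLr.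
have r_ge0 : 0 <= r by lra.
have [x [x_le1 cos_law]] := cosine_law_solution L_ge0 T_ge0 rLT LrT TLr.
set y := Num.sqrt (1 - x ^+ 2).
have y2 : y ^+ 2 = 1 - x ^+ 2 by rewrite sqr_sqrtr // subr_ge0.
exists (x +i* y); split; rewrite normc_def /=.
  by rewrite y2 addrC subrK sqrtr1.
rewrite !mul0r subr0 add0r addr0.
suff -> : (L + T * x) ^+ 2 + (T * y) ^+ 2 = r ^+ 2 by rewrite sqrtr_sqr ger0_norm.
by rewrite exprMn y2; nra.
Qed.

Lemma triangle_closes (L r T : R) :
  0 <= L -> 0 <= T -> r <= L + T -> L <= r + T -> T <= L + r ->
  exists w v : R[i], [/\ `|w| = 1, `|v| = 1 & L%:C + r%:C * w + T%:C * v = 0].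
Proof.
move=> L_ge0 T_ge0 rLT LrT TLr.
have [v [v1 vr]] := exists_unit_normD L_ge0 T_ge0 rLT LrT TLr.
pose z : R[i] := L%:C + T%:C * v.
have zr : `|z| = r%:C := vr.
have [r0|r_neq0] := eqVneq r 0.
  exists 1, v; split; rewrite ?normr1 // r0 mul0r addr0.
  by apply/eqP; rewrite -normr_eq0 zr r0.
have z_neq0 : `|z| != 0 by rewrite zr; apply: contra_neq r_neq0 => /complexI.
exists (- z / `|z|), v; split=> //.
  by rewrite normrM normrN normfV normr_id divff.
by rewrite -zr mulrC divfK // addrAC -/z subrr.
Qed.

Lemma polygon_closes n (r : 'I_n -> R) :
  (forall i, 0 <= r i) -> (forall i, r i <= \sum_(j < n | j != i) r j) ->
  exists u : 'I_n -> R[i],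
    (forall i, `|u i| = 1) /\ \sum_(i < n) (r i)%:C * u i = 0.
Proof.
case: n r => [|n] r r_ge0 r_le; first by exists (fun=> 1); rewrite big_ord0 normr1.
have [j [lo hi]] := half_sum_index r_ge0.
set L := \sum_(i < n.+1 | (i < j)%N) r i in lo hi.
set T := \sum_(i < n.+1 | (j < i)%N) r i.
have S3 := big_ord_split3 j r; rewrite -/L -/T in S3.
have others : \sum_(i < n.+1 | i != j) r i = L + T.
  by move: S3; rewrite (bigD1 j) //=; lra.
have L_ge0 : 0 <= L by rewrite sumr_ge0.
have T_ge0 : 0 <= T by rewrite sumr_ge0.
have rLT : r j <= L + T by rewrite -others.
have LrT : L <= r j + T by lra.
have TLr : T <= L + r j by lra.
have [w [v [w1 v1 closed]]] := triangle_closes L_ge0 T_ge0 rLT LrT TLr.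
exists (fun i => if (i < j)%N then 1 else if i == j then w else v); split.
  by move=> i; case: ifP => _; [rewrite normr1 | case: ifP].
rewrite (big_ord_split3 j) ltnn eqxx -[in RHS]closed; congr (_ + _ * _ + _).
  rewrite rmorph_sum; apply: eq_bigr => i ->; exact: mulr1.
rewrite rmorph_sum mulr_suml; apply: eq_bigr => i ji.
by rewrite ltnNge ltnW //= ifN // neq_ltn ji orbT.
Qed.
End PlanarPolygons.

Section BracketSets.
Variable R : realType.
Local Open Scope complex_scope.

Lemma eq_Brac_s d s (a a' b b' : 'I_d -> R) :
  a =1 a' -> b =1 b' -> Brac_s s a b -> Brac_s s a' b'.
Proof. by move=> /boolp.funext <- /boolp.funext <-. Qed.

Lemma simplex_convex d (a1 a2 : 'I_d -> R) t1 t2 :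
  simplex a1 -> simplex a2 -> 0 <= t1 -> 0 <= t2 -> t1 + t2 = 1 ->
  simplex (fun j => t1 * a1 j + t2 * a2 j).
Proof.
move=> [a1_ge0 a1_sum] [a2_ge0 a2_sum] t1_ge0 t2_ge0 t_sum; split.
  by move=> i; rewrite addr_ge0 ?mulr_ge0.
by rewrite big_split /= -!mulr_sumr a1_sum a2_sum !mulr1.
Qed.

Lemma ctr_block_diag m n (X : 'M[R[i]]_m) (Y : 'M[R[i]]_n) :
  ctr (block_mx X 0 0 Y) = block_mx (ctr X) 0 0 (ctr Y).
Proof. by rewrite /ctr map_block_mx tr_block_mx !map_mx0 !trmx0. Qed.

Lemma sum_mul_ctr_block_diag d m n (A B : 'I_d -> 'M[R[i]]_m) (A' B' : 'I_d -> 'M[R[i]]_n) :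
  \sum_(i < d) block_mx (A i) 0 0 (A' i) *m ctr (block_mx (B i) 0 0 (B' i)) =
  block_mx (\sum_(i < d) A i *m ctr (B i)) 0 0 (\sum_(i < d) A' i *m ctr (B' i)).
Proof.
by under eq_bigr do rewrite ctr_block_diag mulmx_block_diag; rewrite sum_block_diag.
Qed.

Lemma Brac_s_direct_sum d s1 s2 (a1 b1 a2 b2 : 'I_d -> R) :
  (0 < s1)%N -> (0 < s2)%N -> Brac_s s1 a1 b1 -> Brac_s s2 a2 b2 ->
  Brac_s (s1 + s2)
    (fun j => s1%:R / (s1 + s2)%:R * a1 j + s2%:R / (s1 + s2)%:R * a2 j)
    (fun j => s1%:R / (s1 + s2)%:R * b1 j + s2%:R / (s1 + s2)%:R * b2 j).
Proof.
move=> s1_gt0 s2_gt0 [sa1 [sb1 [A1 [B1 [A1A1 [B1B1 [A1B1 [trA1 trB1]]]]]]]]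
                    [sa2 [sb2 [A2 [B2 [A2A2 [B2B2 [A2B2 [trA2 trB2]]]]]]]].
have s_neq0 (F : numFieldType) m : (0 < m)%N -> (m%:R : F) != 0.
  by rewrite pnatr_eq0 -lt0n.
have s12_gt0 : (0 < s1 + s2)%N by rewrite addn_gt0 s1_gt0.
have t_sum : s1%:R / (s1 + s2)%:R + s2%:R / (s1 + s2)%:R = 1 :> R.
  by rewrite -mulrDl -natrD divff ?s_neq0.
have t1_ge0 : 0 <= s1%:R / (s1 + s2)%:R :> R by rewrite divr_ge0 ?ler0n.
have t2_ge0 : 0 <= s2%:R / (s1 + s2)%:R :> R by rewrite divr_ge0 ?ler0n.
have tr_mix (x1 x2 : R) (y1 y2 : R[i]) :
    s1%:R^-1 * y1 = x1%:C -> s2%:R^-1 * y2 = x2%:C ->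
    (s1 + s2)%:R^-1 * (y1 + y2) =
    (s1%:R / (s1 + s2)%:R * x1 + s2%:R / (s1 + s2)%:R * x2)%:C.
  move=> e1 e2; rewrite [RHS]rmorphD !(rmorphM (real_complex R)).
  rewrite !(fmorphV (real_complex R)) !rmorph_nat.
  rewrite -[X in _ * X + _]e1 -[X in _ + _ * X]e2.
  by field; rewrite -natrD !s_neq0.
do 2![split; first exact: simplex_convex].
exists (fun i => block_mx (A1 i) 0 0 (A2 i)), (fun i => block_mx (B1 i) 0 0 (B2 i)).
rewrite !sum_mul_ctr_block_diag A1A1 A2A2 B1B1 B2B2 A1B1 A2B2 block_mx0 -!scalar_mx_block.
do 3!split=> //.
by split=> i; rewrite ctr_block_diag mulmx_block_diag mxtrace_block; apply: tr_mix.
Qed.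

Lemma Brac_s_weighted_sum d k (s : 'I_k -> nat) (a b : 'I_k -> 'I_d -> R) :
  (0 < k)%N -> (forall l, 0 < s l)%N -> (forall l, Brac_s (s l) (a l) (b l)) ->
  Brac_s (\sum_(l < k) s l)%N
    (fun j => \sum_(l < k) ((s l)%:R / (\sum_(m < k) s m)%:R) * a l j)
    (fun j => \sum_(l < k) ((s l)%:R / (\sum_(m < k) s m)%:R) * b l j).
Proof.
case: k s a b => // k s a b _; elim: k s a b => [|k IH] s a b s_gt0 Bab.
  have s0_neq0 : (s ord0)%:R != 0 :> R by rewrite pnatr_eq0 -lt0n.
  by rewrite big_ord1; apply: eq_Brac_s (Bab ord0) => j; rewrite big_ord1 divff ?mul1r.
pose w (l : 'I_k.+1) := widen_ord (leqnSn k.+1) l.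
set S := (\sum_(l < k.+1) s (w l))%N.
have S_gt0 : (0 < S)%N by rewrite /S big_ord_recl addn_gt0 s_gt0.
have S_neq0 : (S%:R : R) != 0 by rewrite pnatr_eq0 -lt0n.
have total : (\sum_(l < k.+2) s l)%N = (S + s ord_max)%N by rewrite big_ord_recr.
have := Brac_s_direct_sum S_gt0 (s_gt0 ord_max)
  (IH (s \o w) (a \o w) (b \o w) (fun=> s_gt0 _) (fun=> Bab _)) (Bab ord_max).
rewrite total; apply: eq_Brac_s => j /=; rewrite [RHS]big_ord_recr /= mulr_sumr;
  congr (_ + _); apply: eq_bigr => l _; field; rewrite -natrD pnatr_eq0 addn_eq0;
  by rewrite negb_and -lt0n S_gt0.
Qed.

Lemma Brac_s_muln d k s (a b : 'I_d -> R) :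
  (0 < k)%N -> (0 < s)%N -> Brac_s s a b -> Brac_s (k * s) a b.
Proof.
move=> k_gt0 s_gt0 Bab.
have := @Brac_s_weighted_sum d k (fun=> s) (fun=> a) (fun=> b) k_gt0 (fun=> s_gt0) (fun=> Bab).
have k_neq0 : k%:R != 0 :> R by rewrite pnatr_eq0 -lt0n.
have s_neq0 : s%:R != 0 :> R by rewrite pnatr_eq0 -lt0n.
rewrite big_const_ord iter_addn_0 mulnC; apply: eq_Brac_s => j;
  by rewrite sumr_const card_ord -[_ *+ k]mulr_natr natrM; field; rewrite s_neq0 k_neq0.
Qed.

Lemma ctr_scalar n (c : R[i]) : ctr (c%:M : 'M_n) = (conjc c)%:M.
Proof. by rewrite /ctr map_scalar_mx tr_scalar_mx. Qed.

Lemma mxtrace_mul_ctr1 (X Y : 'M[R[i]]_1) : \tr (X *m ctr Y) = X 0 0 * conjc (Y 0 0).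
Proof. by rewrite /mxtrace big_ord1 !mxE big_ord1 !mxE. Qed.

Lemma Brac_s1_Brac d (a b : 'I_d -> R) : Brac_s 1 a b -> Brac a b.
Proof.
move=> [sa [sb [A [B [_ [_ [AB0 [trA trB]]]]]]]]; split=> //; split=> //.
have [[a_ge0 _] [b_ge0 _]] := (sa, sb).
pose z i := A i 0 0 * conjc (B i 0 0).
have z_sum : \sum_(i < d) z i = 0.
  rewrite -[RHS](mxtrace0 _ 1) -AB0 raddf_sum.
  by apply: eq_bigr => i _; rewrite /= mxtrace_mul_ctr1.
have z_norm i : (Num.sqrt (a i * b i))%:C = `|z i|.
  apply/eqP; rewrite -(@eqrXn2 _ 2) ?normr_ge0 ?ler0c ?sqrtr_ge0 //.
  rewrite -(rmorphXn (real_complex R)) sqr_sqrtr ?mulr_ge0 //.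
  rewrite normrM normcJ exprMn !sqr_normc (rmorphM (real_complex R)).
  by move: (trA i) (trB i); rewrite !mxtrace_mul_ctr1 invr1 !mul1r => -> ->.
move=> i; rewrite -lecR z_norm rmorph_sum /=.
under eq_bigr do rewrite z_norm.
have /eqP : z i + \sum_(j < d | j != i) z j = 0 by rewrite -[RHS]z_sum [RHS](bigD1 i).
by rewrite addr_eq0 => /eqP ->; rewrite normrN ler_norm_sum.
Qed.

Lemma Brac_Brac_s1 d (a b : 'I_d -> R) : Brac a b -> Brac_s 1 a b.
Proof.
move=> [sa [sb sides]]; split=> //; split=> //.
have [[a_ge0 a_sum] [b_ge0 b_sum]] := (sa, sb).
have [u [u1 closed]] := polygon_closes (fun i => sqrtr_ge0 (a i * b i)) sides.
pose alpha i : R[i] := (Num.sqrt (a i))%:C.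
pose beta i : R[i] := conjc ((Num.sqrt (b i))%:C * u i).
have mul_ctr (x y : R[i]) : (x%:M : 'M_1) *m ctr y%:M = (x * conjc y)%:M.
  by rewrite ctr_scalar -scalar_mxM.
have alpha2 i : alpha i * conjc (alpha i) = (a i)%:C.
  by rewrite /alpha conjc_real -(rmorphM (real_complex R)) -expr2 sqr_sqrtr.
have beta2 i : beta i * conjc (beta i) = (b i)%:C.
  rewrite /beta conjcK mulrC -sqr_normc normrM u1 mulr1 ger0_norm ?ler0c ?sqrtr_ge0 //.
  by rewrite -(rmorphXn (real_complex R)) sqr_sqrtr.
have alpha_beta i : alpha i * conjc (beta i) = (Num.sqrt (a i * b i))%:C * u i.
  by rewrite /alpha /beta conjcK mulrA -(rmorphM (real_complex R)) sqrtrM.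
exists (fun i => (alpha i)%:M), (fun i => (beta i)%:M).
split.
  under eq_bigr do rewrite mul_ctr alpha2.
  by rewrite -raddf_sum -rmorph_sum a_sum.
split.
  under eq_bigr do rewrite mul_ctr beta2.
  by rewrite -raddf_sum -rmorph_sum b_sum.
split.
  under eq_bigr do rewrite mul_ctr alpha_beta.
  by rewrite -raddf_sum /= closed raddf0.
by split=> i; rewrite mul_ctr mxtrace_scalar invr1 mul1r ?alpha2 ?beta2.
Qed.
End BracketSets.

Theorem corollary3p6 (R : realType) (d : nat) (hd : (2 <= d)%N) :
  (forall (k : nat) (s : 'I_k -> nat), (0 < k)%N -> (forall l, (1 <= s l)%N) ->
     forall a b : 'I_k -> 'I_d -> R,
       (forall l, Brac_s (s l) (a l) (b l)) ->
       Brac_s (\sum_(l < k) s l)%N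
         (fun j => \sum_(l < k) ((s l)%:R / (\sum_(m < k) s m)%:R) * a l j)
         (fun j => \sum_(l < k) ((s l)%:R / (\sum_(m < k) s m)%:R) * b l j))
  /\ (forall a b : 'I_d -> R, Brac_s 1 a b <-> Brac a b)
  /\ (forall (s : nat), (1 <= s)%N -> forall a b : 'I_d -> R, Brac a b -> Brac_s s a b).
Proof.
split; first by move=> k s k_gt0 s_gt0 a b; exact: Brac_s_weighted_sum.
split; first by move=> a b; split; [exact: Brac_s1_Brac | exact: Brac_Brac_s1].
move=> s s_gt0 a b /Brac_Brac_s1 /(Brac_s_muln s_gt0 (ltn0Sn 0)).
by rewrite muln1.
Qed.
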